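(* Let $K$ be a non-archimedean local field ($p$-field), and let $n>0$ be an integer. If $s_1,\dots,s_t\in V$ satisfy $\mathrm{mod}_K\big(d(s_1\cdots s_i)\big)\in[q^{-n},q^n]$ for every $i\in\{1,\dots,t\}$, then $s_1\cdots s_t\in\Omega_n$.
   Context: $\mathrm{mod}_K$ is the module of $K$ (the factor by which multiplication scales a Haar measure of $K$), $q$ the cardinality of the residue field, $\pi$ a uniformizer (so $\mathrm{mod}_K(\pi)=q^{-1}$), $R=\{x\in K:\mathrm{mod}_K(x)\le 1\}$ the ring of integers and $R^*=\{x\in K:\mathrm{mod}_K(x)=1\}$ its group of units. $\mathrm{sol}(K)$ is the group of matrices $\begin{pmatrix} a&0&x\\0&a^{-1}&y\\0&0&1\end{pmatrix}$ with $a\in K^*$, $x,y\in K$, and $d:\mathrm{sol}(K)\to K^*$ sends such a matrix to $a$. $V=V_1\cup V_1^{-1}$ where $V_1$ is the set of such matrices with $a=\pi^{r}u$, $r\in\{-1,0,1\}$, $u\in R^*$, $x,y\in R$. For $n>0$, $\Omega_n$ is the set of such matrices with $\mathrm{mod}_K(a)\in[q^{-n},q^n]$ and $x,y\in\pi^{-n}R$. *)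

From HB Require Import structures.
From mathcomp Require Import all_boot all_order all_algebra.
Set Implicit Arguments. Unset Strict Implicit. Unset Printing Implicit Defensive.
Import Order.TTheory GRing.Theory Num.Theory.
Local Open Scope ring_scope.

(* A non-archimedean local field is presented by a field K together with its
   normalized discrete valuation v : K -> int (the value at 0 is irrelevant)
   and the cardinality q of the residue field. *)

Section LocalField.
Variable K : fieldType.
Variable v : K -> int.

(* "x has valuation >= N" (0 has valuation +oo) *)
Definition vge (N : int) (x : K) : Prop := x = 0 \/ (N <= v x)%R.

Definition is_nonarch_local_field (q : nat) : Prop :=
  [/\
      (forall x y, x != 0 -> y != 0 -> v (x * y) = v x + v y),
      (forall x y, x != 0 -> y != 0 -> x + y != 0 ->
                     Num.min (v x) (v y) <= v (x + y)),
      (* discrete, normalized: a uniformizer exists *)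
      (exists pi : K, pi != 0 /\ v pi = 1),
      (* the residue field R / piR is finite with q elements *)
      (exists reps : seq K,
          [/\ size reps = q,
              (forall r, r \in reps -> vge 0 r),
              (forall i j, (i < q)%N -> (j < q)%N -> i <> j ->
                   ~ vge 1 (nth 0 reps i - nth 0 reps j)) &
              (forall x, vge 0 x -> exists2 i, (i < q)%N &
                   vge 1 (x - nth 0 reps i))]) &
      (forall u : nat -> K,
          (forall N : int, exists M, forall m k, (M <= m)%N -> (M <= k)%N ->
               vge N (u m - u k)) ->
          exists l, forall N : int, exists M, forall m, (M <= m)%N ->
               vge N (u m - l))].

Definition modK (q : nat) (x : K) : rat :=
  if x == 0 then 0 else (q%:R : rat) ^ (- v x).

Definition inR (q : nat) (x : K) : Prop := modK q x <= 1.

Definition solmx (a x y : K) : 'M[K]_3 :=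
  \matrix_(i < 3, j < 3)
    (if (i == 0 :> nat) && (j == 0 :> nat) then a
     else if (i == 0 :> nat) && (j == 2 :> nat) then x
     else if (i == 1 :> nat) && (j == 1 :> nat) then a^-1
     else if (i == 1 :> nat) && (j == 2 :> nat) then y
     else if (i == 2 :> nat) && (j == 2 :> nat) then 1
     else 0).

Definition in_sol (s : 'M[K]_3) : Prop :=
  exists a x y, a != 0 /\ s = solmx a x y.

Definition dsol (s : 'M[K]_3) : K := s 0 0.

Definition V1 (q : nat) (pi : K) (s : 'M[K]_3) : Prop :=
  exists (r : int) (u a x y : K),
    [/\ r \in [:: -1; 0; 1], modK q u = 1, a = pi ^ r * u,
        inR q x /\ inR q y & s = solmx a x y].

Definition Vset (q : nat) (pi : K) (s : 'M[K]_3) : Prop :=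
  V1 q pi s \/ (s \in unitmx /\ V1 q pi (invmx s)).

Definition Omega (q : nat) (pi : K) (n : nat) (s : 'M[K]_3) : Prop :=
  exists a x y, [/\ a != 0, s = solmx a x y,
    (q%:R : rat) ^ (- n%:Z) <= modK q a <= (q%:R : rat) ^ n%:Z,
    (exists r, inR q r /\ x = pi ^ (- n%:Z) * r) &
    (exists r, inR q r /\ y = pi ^ (- n%:Z) * r)].

End LocalField.

From HB Require Import structures.
From mathcomp Require Import all_boot all_order all_algebra.
From mathcomp Require Import ring zify.
Import Order.TTheory GRing.Theory Num.Theory.
Set Implicit Arguments. Unset Strict Implicit. Unset Printing Implicit Defensive.
Local Open Scope ring_scope.

(* Write the partial product as [solmx A X Y].  Right multiplication by
   [solmx b x y] gives [solmx (A b) (A x + X) (A^-1 y + Y)].  If [x, y] are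
   integral, [A x] and [A^-1 y] lie in [pi^-n R] because [|v A| <= n]; if the
   factor is the inverse of an element of [V1], then [b^-1 x] and [b y] are
   integral and [A x = (A b) (b^-1 x)], [A^-1 y = (A b)^-1 (b y)] lie in
   [pi^-n R] because [|v (A b)| <= n].  Both valuation bounds are exactly the
   hypotheses on the partial products, so the off-diagonal entries never leave
   [pi^-n R]. *)

Section SolMatrices.
Variable K : fieldType.

Lemma solmx1 : solmx 1 0 0 = 1%:M :> 'M[K]_3.
Proof.
apply/matrixP => i j; rewrite !mxE /=.
by case: i => [[|[|[|i]]] ?] //; case: j => [[|[|[|j]]] ?] //=; rewrite ?invr1.
Qed.

Lemma solmx_mul (a x y b x' y' : K) : a != 0 ->
  solmx a x y *m solmx b x' y' = solmx (a * b) (a * x' + x) (a^-1 * y' + y).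
Proof.
move=> a0; apply/matrixP => i j; rewrite !mxE !big_ord_recr big_ord0 /= !mxE /=.
by case: i => [[|[|[|i]]] ?] //; case: j => [[|[|[|j]]] ?] //=;
  rewrite ?invfM; ring.
Qed.

Lemma solmx_inv (a x y : K) : a != 0 ->
  invmx (solmx a x y) = solmx a^-1 (- (a^-1 * x)) (- (a * y)).
Proof.
move=> a0.
have h : solmx a x y *m solmx a^-1 (- (a^-1 * x)) (- (a * y)) = 1%:M.
  rewrite solmx_mul // -solmx1; congr solmx.
  - by rewrite divff.
  - by rewrite mulrN mulrA divff // mul1r addNr.
  - by rewrite mulrN mulrA mulVf // mul1r addNr.
have [u _] := mulmx1_unit h.
by rewrite -[RHS](mulKmx u) h mulmx1.
Qed.

Lemma dsol_solmx (a x y : K) : dsol (solmx a x y) = a.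
Proof. by rewrite /dsol mxE. Qed.

End SolMatrices.

Section Valuation.
Variable K : fieldType.
Variable v : K -> int.
Hypothesis vM : forall x y, x != 0 -> y != 0 -> v (x * y) = v x + v y.
Hypothesis vD : forall x y, x != 0 -> y != 0 -> x + y != 0 ->
  Num.min (v x) (v y) <= v (x + y).

Lemma v1 : v 1 = 0.
Proof.
by have := vM (oner_neq0 K) (oner_neq0 K); rewrite mulr1; move: (v 1) => a h; lia.
Qed.

Lemma vV x : x != 0 -> v x^-1 = - v x.
Proof. by move=> x0; have := vM x0 (invr_neq0 x0); rewrite divff // v1 => h; lia. Qed.

Lemma vN x : x != 0 -> v (- x) = v x.
Proof.
move=> x0; have m10 : (-1 : K) != 0 by rewrite oppr_eq0 oner_neq0.
have vm1 : v (-1) = 0 by have := vM m10 m10; rewrite mulrNN mulr1 v1 => h; lia.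
by rewrite -mulN1r vM // vm1 add0r.
Qed.

Lemma vX pi m : pi != 0 -> v pi = 1 -> v (pi ^+ m) = m%:Z.
Proof.
move=> pi0 vpi; elim: m => [|m IH]; first by rewrite expr0 v1.
by rewrite exprS vM ?expf_neq0 // vpi IH; lia.
Qed.

Lemma vgeN N x : vge v N x -> vge v N (- x).
Proof.
have [->|x0] := eqVneq x 0; first by left; rewrite oppr0.
by case=> [/eqP|h]; [rewrite (negbTE x0) | right; rewrite vN].
Qed.

Lemma vgeD N x y : vge v N x -> vge v N y -> vge v N (x + y).
Proof.
have [->|x0] := eqVneq x 0; first by rewrite add0r.
have [->|y0] := eqVneq y 0; first by rewrite addr0.
have [->|s0] := eqVneq (x + y) 0; first by left.
case=> [/eqP|hx]; first by rewrite (negbTE x0).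
case=> [/eqP|hy]; first by rewrite (negbTE y0).
by right; apply: le_trans (vD x0 y0 s0); rewrite le_min hx hy.
Qed.

Lemma vgeM N M x y : vge v N x -> vge v M y -> vge v (N + M) (x * y).
Proof.
have [->|x0] := eqVneq x 0; first by rewrite mul0r; left.
have [->|y0] := eqVneq y 0; first by rewrite mulr0; left.
case=> [/eqP|hx]; first by rewrite (negbTE x0).
case=> [/eqP|hy]; first by rewrite (negbTE y0).
by right; rewrite vM //; apply: lerD.
Qed.

Lemma vgeMr N x y : vge v N x -> vge v 0 y -> vge v N (x * y).
Proof. by move=> hx hy; rewrite -[N]addr0; apply: vgeM. Qed.

Lemma vge_normv N a : a != 0 -> `|v a| <= N%:Z ->
  vge v (- N%:Z) a /\ vge v (- N%:Z) a^-1.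
Proof.
by move=> a0; rewrite ler_norml => /andP[h1 h2]; split; right; rewrite ?vV //; lia.
Qed.

Lemma vge_solmx_mul N A X Y b x y : b != 0 -> `|v A| <= N%:Z ->
  `|v (A * b)| <= N%:Z -> vge v (- N%:Z) X -> vge v (- N%:Z) Y ->
  (vge v 0 x /\ vge v 0 y) \/ (vge v 0 (b^-1 * x) /\ vge v 0 (b * y)) ->
  vge v (- N%:Z) (A * x + X) /\ vge v (- N%:Z) (A^-1 * y + Y).
Proof.
move=> b0 hA hAb hX hY hxy.
have [A0 | A0] := eqVneq A 0.
  by rewrite A0 invr0 !mul0r !add0r.
have [vA vAV] := vge_normv A0 hA.
have [vAb vAbV] := vge_normv (mulf_neq0 A0 b0) hAb.
case: hxy => [[hx hy] | [hx hy]]; split; apply: vgeD => //.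
- exact: vgeMr.
- exact: vgeMr.
- by rewrite -[x](mulVKf b0) mulrA; apply: vgeMr.
- by rewrite -[y](mulKf b0) mulrA -invfM; apply: vgeMr.
Qed.

Lemma vge_prod_solmx N (s : nat -> 'M[K]_3) t :
  (forall j, (1 <= j <= t)%N -> exists b x y, [/\ b != 0, s j = solmx b x y &
     (vge v 0 x /\ vge v 0 y) \/ (vge v 0 (b^-1 * x) /\ vge v 0 (b * y))]) ->
  (forall i, (1 <= i <= t)%N ->
     `|v (dsol (\prod_(1 <= j < i.+1) s j))| <= N%:Z) ->
  exists A X Y, [/\ A != 0, \prod_(1 <= j < t.+1) s j = solmx A X Y,
     `|v A| <= N%:Z, vge v (- N%:Z) X & vge v (- N%:Z) Y].
Proof.
move=> hs hbd; elim: t hs hbd => [|t IH] hs hbd.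
  by exists 1, 0, 0; split; rewrite ?big_geq ?solmx1 ?v1 ?oner_neq0 //; left.
have [|i /andP[i1 it]|A [X [Y [A0 hP hA hX hY]]]] := IH.
- by move=> j /andP[j1 jt]; apply: hs; rewrite j1 ltnW.
- by apply: hbd; rewrite i1 ltnW.
have t1 : (1 <= t.+1 <= t.+1)%N by rewrite leqnn.
have [b [x [y [b0 hst hxy]]]] := hs _ t1.
have hPt : \prod_(1 <= j < t.+2) s j = solmx (A * b) (A * x + X) (A^-1 * y + Y).
  by rewrite big_nat_recr //= hP hst -mulmxE solmx_mul.
have := hbd _ t1; rewrite hPt dsol_solmx => hAb.
have [hX' hY'] := vge_solmx_mul b0 hA hAb hX hY hxy.
by exists (A * b), (A * x + X), (A^-1 * y + Y); split; rewrite ?mulf_neq0.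
Qed.

Section Modulus.
Variable q : nat.
Hypothesis q_gt1 : (1 < q)%N.

Let q_gt1r : 1 < (q%:R : rat). Proof. by rewrite ltr1n. Qed.

Lemma modK_neq0 x : x != 0 -> modK v q x = (q%:R : rat) ^ (- v x).
Proof. by move=> x0; rewrite /modK (negbTE x0). Qed.

Lemma inRP x : inR v q x <-> vge v 0 x.
Proof.
rewrite /inR; have [->|x0] := eqVneq x 0; first by rewrite /modK eqxx; split => //; left.
rewrite modK_neq0 // -(expr0z (q%:R : rat)) ler_eXz2l //.
by split=> [h|[/eqP|h]]; [right; lia | rewrite (negbTE x0) | lia].
Qed.

Lemma modK_boundsP (N : nat) x :
  (q%:R : rat) ^ (- N%:Z) <= modK v q x <= (q%:R : rat) ^ N%:Z <->
  x != 0 /\ `|v x| <= N%:Z.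
Proof.
have [->|x0] := eqVneq x 0.
  by rewrite /modK eqxx lt_geF ?exprz_gt0 ?(lt_trans ltr01 q_gt1r) //; split => -[].
rewrite modK_neq0 // !ler_eXz2l // ler_norml.
by split=> [/andP[h1 h2]|[_ /andP[h1 h2]]]; [split=> //|]; apply/andP; split; lia.
Qed.

Lemma vge_pi_scaled pi (N : nat) x : pi != 0 -> v pi = 1 ->
  vge v (- N%:Z) x -> exists r, inR v q r /\ x = pi ^ (- N%:Z) * r.
Proof.
move=> pi0 vpi hx; exists (pi ^+ N * x); split; last by rewrite -exprnN mulKf ?expf_neq0.
apply/inRP; rewrite -(subrr N%:Z); apply: vgeM hx.
by right; rewrite vX.
Qed.

Lemma V1_solmx pi s : pi != 0 -> V1 v q pi s ->
  exists a x y, [/\ a != 0, s = solmx a x y, vge v 0 x & vge v 0 y].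
Proof.
move=> pi0 [r [u [a [x [y [_ hu -> [/inRP hx /inRP hy] ->]]]]]].
exists (pi ^ r * u), x, y; split=> //; rewrite mulf_neq0 ?expfz_neq0 //.
by apply: contra_eq_neq hu => ->; rewrite /modK eqxx.
Qed.

Lemma Vset_solmx pi s : pi != 0 -> Vset v q pi s -> exists b x y, [/\ b != 0,
  s = solmx b x y &
  (vge v 0 x /\ vge v 0 y) \/ (vge v 0 (b^-1 * x) /\ vge v 0 (b * y))].
Proof.
move=> pi0 [/(V1_solmx pi0) [a [x [y [a0 -> hx hy]]]] |].
  by exists a, x, y; split=> //; left.
move=> [s_unit /(V1_solmx pi0) [a [x [y [a0 hs hx hy]]]]].
exists a^-1, (- (a^-1 * x)), (- (a * y)); split; rewrite ?invr_neq0 //.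
  by rewrite -solmx_inv // -hs invmxK.
by right; rewrite invrK !mulrN mulVKf // mulKf //; split; apply: vgeN.
Qed.

End Modulus.

End Valuation.

(* [modK] is monotone in [v] only when [q > 1]; this holds because the residues
   of [0] and [1] differ. *)
Lemma residue_card_gt1 (K : fieldType) (v : K -> int) (q : nat) :
  is_nonarch_local_field v q -> (1 < q)%N.
Proof.
case=> vM vD _ [reps [_ _ _ cover]] _.
have [i i_lt h0] := cover 0 (or_introl erefl).
have [j j_lt h1] : exists2 j, (j < q)%N & vge v 1 (1 - nth 0 reps j).
  by apply: cover; right; rewrite v1.
case: q i_lt j_lt cover => [//|[|//]] i_lt j_lt _.
case: i i_lt h0 => // _ h0; case: j j_lt h1 => // _ h1.
have := vgeD vD h1 (vgeN vM h0); rewrite sub0r opprK subrK.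
by case=> [/eqP|]; rewrite ?oner_eq0 // v1.
Qed.

Theorem lemma3 (K : fieldType) (v : K -> int) (q : nat) (pi : K)
  (HK : is_nonarch_local_field v q) (Hpi0 : pi != 0) (Hpi : v pi = 1)
  (n : nat) (Hn : (0 < n)%N) (t : nat) (s : nat -> 'M[K]_3)
  (HsV : forall j, (1 <= j <= t)%N -> Vset v q pi (s j))
  (Hmod : forall i, (1 <= i <= t)%N ->
     (q%:R : rat) ^ (- n%:Z) <= modK v q (dsol (\prod_(1 <= j < i.+1) s j))
       <= (q%:R : rat) ^ n%:Z) :
  Omega v q pi n (\prod_(1 <= j < t.+1) s j).
Proof.
have q_gt1 := residue_card_gt1 HK.
case: HK => vM vD _ _ _.
have hV j jt := Vset_solmx vM q_gt1 Hpi0 (HsV j jt).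
have hbd i : (1 <= i <= t)%N -> `|v (dsol (\prod_(1 <= j < i.+1) s j))| <= n%:Z.
  by move=> it; have /(modK_boundsP v q_gt1) [] := Hmod i it.
have [A [X [Y [A0 -> hA hX hY]]]] := vge_prod_solmx vM vD hV hbd.
exists A, X, Y; split=> //.
- exact/(modK_boundsP v q_gt1).
- exact: (vge_pi_scaled vM q_gt1).
- exact: (vge_pi_scaled vM q_gt1).
Qed.
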